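(* Let $s \ge 2$, let $D = \{(t_1, \ldots, t_{s-1}) \in \mathbb{R}^{s-1} : 0 < t_1 < t_2 < \cdots < t_{s-1} < 1\}$, and set $t_s = 1$. For $i = 1, \ldots, s$ define $K_i : D \to \mathbb{R}$ by \[ K_i(t_1, \ldots, t_{s-1}) = \prod_{j=1,\ldots,s,\ j \neq i} \frac{t_j}{t_j - t_i}. \] Let $F : D \to \mathbb{R}^{s-1}$ be $F(t_1,\ldots,t_{s-1}) = (K_1, \ldots, K_{s-1})$, and let $J$ be its Jacobian matrix. Then at every point of $D$, \[ \det(J) = (s-1)! \prod_{i=1}^{s-1} \frac{K_i}{t_s - t_i}. \] *)

From HB Require Import structures.
From mathcomp Require Import all_boot all_order all_algebra.
From mathcomp Require Import all_classical all_reals all_analysis.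
Set Implicit Arguments. Unset Strict Implicit. Unset Printing Implicit Defensive.
Import Order.TTheory GRing.Theory Num.Theory.
Import numFieldNormedType.Exports.
Local Open Scope ring_scope.

(* Throughout, s = n.+1, so points of D live in R^(s-1) = 'rV[R]_n. *)

(* t_ext t j = t_(j+1) for j < n (0-based), and t_s = 1 for j = n. *)
Definition t_ext (R : realType) (n : nat) (t : 'rV[R]_n) (j : 'I_n.+1) : R :=
  match ltnP j n with
  | LtnNotGeq Hj => t 0 (Ordinal Hj)
  | _ => 1
  end.

Definition inD (R : realType) (n : nat) (t : 'rV[R]_n) : Prop :=
  (forall j : 'I_n.+1, 0 < t_ext t j) /\
  (forall i j : 'I_n.+1, (i < j)%N -> t_ext t i < t_ext t j).

Definition K (R : realType) (n : nat) (i : 'I_n.+1) (t : 'rV[R]_n) : R :=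
  \prod_(j < n.+1 | j != i) (t_ext t j / (t_ext t j - t_ext t i)).

Definition jacobianF (R : realType) (n : nat) (t : 'rV[R]_n) : 'M[R]_n :=
  \matrix_(i < n, j < n) ('D_(delta_mx 0 j) (K (widen_ord (leqnSn n) i)) t).

(* Along a coordinate direction every factor t_j / (t_j - t_i) of K_i is a
   quotient of affine functions, so the Jacobian factors as J = diag(K) E, where
   E_ik = sum_(j <> i) (d_ik t_j - d_jk t_i) / ((t_j - t_i) t_j) is the Jacobian of
   log K.  To compute det E, multiply it by W_km = t_k p_m(t_k), where
   p_m = X^m (X - t_s) vanishes at t_s = 1.  Then (E W)_im = -t_i q_m(t_i), where
   q_m is the sum over all nodes of the divided differences of p_m minus p_m';
   q_m has degree m and leading coefficient s - (m + 1).  Hence E W = -diag(t) V T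
   with V Vandermonde and T triangular of determinant (s-1)!, while
   W = diag(t_k (t_k - 1)) V, which gives det E = (s-1)! / prod_k (1 - t_k). *)

From HB Require Import structures.
From mathcomp Require Import all_boot all_order all_algebra.
From mathcomp Require Import all_classical all_reals all_analysis.
From mathcomp Require Import ring.
Import Order.TTheory GRing.Theory Num.Theory.
Import numFieldNormedType.Exports.
Local Open Scope ring_scope.
Set Implicit Arguments. Unset Strict Implicit. Unset Printing Implicit Defensive.

Section DividedDifference.
Variable R : fieldType.
Implicit Types (p : {poly R}) (c x : R).

Definition ddiff p c : {poly R} := (p - p.[c]%:P) %/ ('X - c%:P).

Lemma ddiffE p c : p - p.[c]%:P = ddiff p c * ('X - c%:P).
Proof. by rewrite divpK //; apply/polyXsubCP; rewrite !hornerE subrr. Qed.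

Lemma horner_ddiff p c x : x != c -> (ddiff p c).[x] = (p.[x] - p.[c]) / (x - c).
Proof.
move=> xc; have /(congr1 (horner^~ x)) := ddiffE p c.
by rewrite !hornerE => ->; rewrite mulfK // subr_eq0.
Qed.

Lemma horner_ddiff_diag p c : (ddiff p c).[c] = p^`().[c].
Proof.
have /(congr1 (fun q => q^`().[c])) := ddiffE p c.
by rewrite derivB derivC subr0 derivM derivXsubC !hornerE subrr mulr0 add0r => <-.
Qed.

Lemma size_ddiff p c : (size (ddiff p c) <= (size p).-1)%N.
Proof.
rewrite size_divp ?polyXsubC_eq0 // size_XsubC -[(size p).-1]subn1; apply: leq_sub2r.
rewrite (leq_trans (size_polyD _ _)) // size_polyN geq_max leqnn.
have [->|p0] := eqVneq p 0; first by rewrite horner0 size_poly0.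
by rewrite (leq_trans (size_polyC_leq1 _)) // size_poly_gt0.
Qed.

Lemma coef_ddiff_lead p c : (1 < size p)%N -> (ddiff p c)`_(size p).-2 = lead_coef p.
Proof.
rewrite /lead_coef; case sp: (size p) => [|[|s]] // _ /=.
have := congr1 (fun q : {poly R} => q`_s.+1) (ddiffE p c).
rewrite coefB coefC /= subr0 mulrBr coefB coefMX coefMC /= => ->.
by rewrite [(ddiff p c)`_s.+1]nth_default ?mul0r ?subr0 // (leq_trans (size_ddiff p c)) ?sp.
Qed.

End DividedDifference.

Section SumOfDividedDifferences.
Variables (R : fieldType) (I : finType) (a : I -> R).
Implicit Type p : {poly R}.

Definition ddsum (p : {poly R}) : {poly R} := \sum_j ddiff p (a j) - p^`().

Lemma horner_ddsum p i : injective a ->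
  (ddsum p).[a i] = \sum_(j | j != i) (p.[a i] - p.[a j]) / (a i - a j).
Proof.
move=> a_inj; rewrite hornerD hornerN horner_sum (bigD1 i) //=.
rewrite horner_ddiff_diag addrAC subrr add0r; apply: eq_bigr => j ji.
by rewrite horner_ddiff // (inj_eq a_inj) eq_sym.
Qed.

Lemma size_ddsum p : (size (ddsum p) <= (size p).-1)%N.
Proof.
apply/leq_sizeP => k le_k; rewrite coefB coef_sum coef_deriv.
rewrite nth_default ?mul0rn ?subr0; last by case: (size p) le_k.
by rewrite big1 // => j _; rewrite nth_default // (leq_trans (size_ddiff _ _)).
Qed.

Lemma coef_ddsum_lead p : (1 < size p)%N ->
  (ddsum p)`_(size p).-2 = lead_coef p *+ #|I| - lead_coef p *+ (size p).-1.
Proof.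
move=> p_gt1; rewrite coefB coef_sum coef_deriv.
under eq_bigr do rewrite coef_ddiff_lead //.
rewrite sumr_const; congr (_ - _).
by rewrite /lead_coef; case: (size p) p_gt1 => [|[]].
Qed.

End SumOfDividedDifferences.

Section LogJacobian.
Variables (R : fieldType) (n : nat) (a : 'I_n.+1 -> R).
Local Notation u := (a ord_max).
Local Notation ι := (widen_ord (leqnSn n)).

(* [dlogK_mx i k] is the partial derivative of [log K_i] in [t_k], for the
   nodes [a = (t_1, ..., t_s)] and [u = t_s]. *)
Definition dlogK_mx : 'M[R]_n := \matrix_(i < n, k < n)
  \sum_(j < n.+1 | j != ι i)
     (((ι i == ι k)%:R * a j - (j == ι k)%:R * a (ι i)) / ((a j - a (ι i)) * a j)).

Lemma sum_widen_delta (F : 'I_n.+1 -> R) j : F ord_max = 0 ->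
  \sum_(k < n) (j == ι k)%:R * F (ι k) = F j.
Proof.
move=> F0; have := @big_ord_recr R 0 +%R n (fun k => (j == k)%:R * F k).
rewrite /= F0 mulr0 addr0 => <-.
rewrite (bigD1 j) //= eqxx mul1r big1 ?addr0 // => k /negbTE.
by rewrite eq_sym => ->; rewrite mul0r.
Qed.

Lemma dlogK_mx_mulE (F : 'I_n.+1 -> R) i : F ord_max = 0 ->
  \sum_(k < n) dlogK_mx i k * F (ι k) =
  \sum_(j | j != ι i) (a j * F (ι i) - a (ι i) * F j) / ((a j - a (ι i)) * a j).
Proof.
move=> F0; under eq_bigr do rewrite mxE mulr_suml.
rewrite exchange_big /=; apply: eq_bigr => j _.
under eq_bigr do rewrite mulrAC mulrBl -!mulrA mulrCA [(j == _)%:R * _]mulrCA.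
by rewrite -mulr_suml sumrB -!mulr_sumr !sum_widen_delta.
Qed.

Definition pmon m : {poly R} := 'X^m * ('X - u%:P).

Lemma pmon_monic m : pmon m \is monic.
Proof. by rewrite monicMl ?monicXn ?monicXsubC. Qed.

Lemma size_pmon m : size (pmon m) = m.+2.
Proof.
by rewrite size_Mmonic ?monicXsubC ?monic_neq0 ?monicXn // size_polyXn size_XsubC addn2.
Qed.

Definition vdm_mx : 'M[R]_n := \matrix_(i < n, l < n) a (ι i) ^+ l.
Definition pmon_mx : 'M[R]_n := \matrix_(k < n, m < n) (a (ι k) * (pmon m).[a (ι k)]).
Definition ddsum_mx : 'M[R]_n := \matrix_(l < n, m < n) (ddsum a (pmon m))`_l.

Lemma pmon_mxE : pmon_mx = diag_mx (\row_k (a (ι k) * (a (ι k) - u))) *m vdm_mx.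
Proof.
by apply/matrixP => k m; rewrite mul_diag_mx !mxE hornerM hornerXn hornerXsubC mulrA mulrAC.
Qed.

Lemma det_ddsum_mx : \det ddsum_mx = n`!%:R.
Proof.
have ddsum_gt (l m : 'I_n) : (m < l)%N -> ddsum_mx l m = 0.
  move=> lt_ml; rewrite mxE nth_default // (leq_trans (size_ddsum _ _)) //.
  by rewrite size_pmon.
rewrite -det_tr det_trig; last by apply/is_trig_mxP => i j /ddsum_gt <-; rewrite mxE.
rewrite -ffactnn ffact_prod natr_prod; apply: eq_bigr => m _.
have := coef_ddsum_lead a (p := pmon m).
rewrite size_pmon (monicP (pmon_monic m)) /= => coef_m.
by rewrite !mxE coef_m // card_ord -natrB //; exact: leqW.
Qed.

Hypothesis a_inj : injective a.
Hypothesis a_neq0 : forall j, a j != 0.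

Lemma det_vdm_mx_neq0 : \det vdm_mx != 0.
Proof.
have -> : vdm_mx = (Vandermonde n (\row_i a (ι i)))^T by apply/matrixP => i l; rewrite !mxE.
rewrite det_tr det_Vandermonde; apply/prodf_neq0 => i _; apply/prodf_neq0 => j lt_ij.
by rewrite !mxE subr_eq0 (inj_eq a_inj) -val_eqE /= gtn_eqF.
Qed.

Lemma dlogK_mx_mul_pmon_mx :
  dlogK_mx *m pmon_mx = diag_mx (\row_i (- a (ι i))) *m (vdm_mx *m ddsum_mx).
Proof.
apply/matrixP => i m; rewrite mul_diag_mx [LHS]mxE.
under eq_bigr do rewrite [pmon_mx _ _]mxE.
rewrite (@dlogK_mx_mulE (fun j => a j * (pmon m).[a j])) /=; last first.
  by rewrite hornerM hornerXsubC subrr !mulr0.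
rewrite !mxE; under [X in _ = _ * X]eq_bigr do rewrite !mxE mulrC.
rewrite -horner_coef_wide; last by rewrite (leq_trans (size_ddsum _ _)) // size_pmon ltn_ord.
rewrite horner_ddsum // mulNr mulr_sumr -sumrN; apply: eq_bigr => j ji.
have aj_neq : a j - a (ι i) != 0 by rewrite subr_eq0 (inj_eq a_inj).
have ai_neq : a (ι i) - a j != 0 by rewrite subr_eq0 (inj_eq a_inj) eq_sym.
by field; rewrite aj_neq ai_neq a_neq0.
Qed.

Lemma det_dlogK_mx : \det dlogK_mx = n`!%:R / \prod_(i < n) (u - a (ι i)).
Proof.
have := congr1 determinant dlogK_mx_mul_pmon_mx.
rewrite pmon_mxE !det_mulmx det_ddsum_mx !det_diag.
under eq_bigr do rewrite mxE; under [X in _ = X * _ -> _]eq_bigr do rewrite mxE.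
rewrite mulrA [X in _ = X -> _]mulrCA [X in _ = X -> _]mulrC.
move=> /(mulIf det_vdm_mx_neq0) det_eq.
have ai_neq_u (i : 'I_n) : a (ι i) - u != 0.
  by rewrite subr_eq0 (inj_eq a_inj) -val_eqE /= ltn_eqF.
have P_neq0 : \prod_i (a (ι i) * (a (ι i) - u)) != 0.
  by apply/prodf_neq0 => i _; rewrite mulf_neq0.
rewrite -(mulfK P_neq0 (\det _)) det_eq mulrAC -prodf_div -prodfV mulrC.
congr (_ * _); apply: eq_bigr => i _.
by field; rewrite a_neq0 ai_neq_u -oppr_eq0 opprB ai_neq_u.
Qed.

End LogJacobian.

Section RealDerivatives.
Variable R : realType.
Implicit Types (f g : R -> R) (x : R).

Lemma derive_along_line n (f : 'rV[R]_n -> R) (x v : 'rV[R]_n) :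
  'D_v f x = 'D_1 (fun h : R => f (h *: v + x)) 0.
Proof.
rewrite /derive; do 2 f_equal; apply/funext => h /=.
by rewrite addr0 scale0r add0r [_%:A]mulr1.
Qed.

Lemma is_derive_affine (b c x : R) : is_derive x 1 (fun h => b + h * c) c.
Proof.
have -> : (fun h => b + h * c) = cst b + (c \*: id) by apply/funext => h /=; rewrite mulrC.
by apply: is_derive_eq; rewrite add0r [_ *: _]mulr1.
Qed.

Lemma is_derive_div f g x df dg : g x != 0 ->
  is_derive x 1 f df -> is_derive x 1 g dg ->
  is_derive x 1 (fun h => f h / g h) ((df * g x - f x * dg) / g x ^+ 2).
Proof.
move=> gx0 f' g'; apply: is_derive_eq (is_deriveM f' (is_deriveV gx0 g')) _.
by rewrite /GRing.scale /=; field.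
Qed.

Lemma is_derive_prod (I : eqType) (s : seq I) (P : pred I) (g : I -> R -> R) (dg : I -> R) x :
  (forall j, P j -> is_derive x 1 (g j) (dg j)) ->
  (forall j, P j -> g j x != 0) ->
  is_derive x 1 (fun h => \prod_(j <- s | P j) g j h)
    ((\prod_(j <- s | P j) g j x) * \sum_(j <- s | P j) dg j / g j x).
Proof.
move=> g' gx0; elim: s => [|j s IH].
  under eq_fun do rewrite big_nil.
  by rewrite !big_nil mul1r; exact: is_derive_cst.
under eq_fun do rewrite big_cons.
rewrite !big_cons; case: ifP => // Pj.
apply: is_derive_eq (is_deriveM (g' j Pj) IH) _.
by rewrite /GRing.scale /=; field; exact: gx0.
Qed.

End RealDerivatives.

Section Jacobian.
Variables (R : realType) (n : nat).
Local Notation ι := (widen_ord (leqnSn n)).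
Implicit Type t : 'rV[R]_n.

Lemma t_ext_widen t i : t_ext t (ι i) = t 0 i.
Proof.
rewrite /t_ext; case: ltnP => [lt_in|]; first by congr (t 0 _); apply/val_inj.
by rewrite leqNgt (ltn_ord i).
Qed.

Lemma t_ext_max t : t_ext t ord_max = 1.
Proof. by rewrite /t_ext; case: ltnP => // lt_nn; exfalso; rewrite ltnn in lt_nn. Qed.

Lemma t_ext_translate t k (h : R) j :
  t_ext (h *: delta_mx 0 k + t) j = t_ext t j + h * (j == ι k)%:R.
Proof.
rewrite /t_ext; case: ltnP => [lt_jn|le_nj]; first by rewrite !mxE addrC.
rewrite (_ : j == ι k = false) ?mulr0 ?addr0 //.
by apply/negbTE; rewrite -val_eqE /= gtn_eqF // (leq_trans (ltn_ord k)).
Qed.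

Lemma inD_t_ext_neq0 t : inD t -> forall j, t_ext t j != 0.
Proof. by move=> [t_gt0 _] j; rewrite gt_eqF. Qed.

Lemma inD_t_ext_inj t : inD t -> injective (t_ext t).
Proof.
move=> [_ t_lt] i j eq_ij.
by case: (ltngtP i j) => [/t_lt|/t_lt|/val_inj //]; rewrite eq_ij ltxx.
Qed.

Lemma derive_K t i k : inD t ->
  'D_(delta_mx 0 k) (K (ι i)) t = K (ι i) t * dlogK_mx (t_ext t) i k.
Proof.
move=> tD; rewrite derive_along_line mxE.
set a := t_ext t; set c := fun j => (j == ι k)%:R : R.
have a_neq0 := inD_t_ext_neq0 tD; have a_inj := inD_t_ext_inj tD.
(* Along [delta_mx 0 k] every factor of [K] is a quotient of affine functions. *)
pose f j h := a j + h * c j; pose g j h := (a j - a (ι i)) + h * (c j - c (ι i)).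
have -> : (fun h => K (ι i) (h *: delta_mx 0 k + t)) =
          (fun h => \prod_(j < n.+1 | j != ι i) (f j h / g j h)).
  apply/funext => h; apply: eq_bigr => j _.
  by rewrite !t_ext_translate /f /g /a /c; congr (_ / _); ring.
have g_neq0 j : j != ι i -> g j 0 != 0.
  by rewrite /g mul0r addr0 subr_eq0 (inj_eq a_inj).
have fg' j : j != ι i -> is_derive (0 : R) 1 (fun h => f j h / g j h)
    ((c j * g j 0 - f j 0 * (c j - c (ι i))) / g j 0 ^+ 2).
  by move=> ji; apply: is_derive_div (g_neq0 j ji) (is_derive_affine _ _ 0) (is_derive_affine _ _ 0).
have fg_neq0 j : j != ι i -> f j 0 / g j 0 != 0.
  by move=> ji; rewrite /f mul0r addr0 mulf_neq0 ?invr_eq0 ?g_neq0.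
rewrite (@derive_val _ _ _ _ _ _ _ (is_derive_prod _ fg' fg_neq0)).
congr (_ * _); first by apply: eq_bigr => j _; rewrite /f /g !mul0r !addr0.
apply: eq_bigr => j ji; have := g_neq0 j ji.
rewrite /f /g /c !mul0r !addr0 => aji_neq0.
by field; rewrite aji_neq0 a_neq0.
Qed.

Lemma jacobianF_factor t : inD t ->
  jacobianF t = diag_mx (\row_i K (ι i) t) *m dlogK_mx (t_ext t).
Proof.
by move=> tD; apply/matrixP => i k; rewrite mul_diag_mx [LHS]mxE derive_K // !mxE.
Qed.

End Jacobian.

Unset Implicit Arguments.

Theorem lemma4p1 (R : realType) (n : nat) (hn : (1 <= n)%N) (t : 'rV[R]_n) :
  inD t ->
  \det (jacobianF t) =
    (n`!)%:R * \prod_(i < n) (K (widen_ord (leqnSn n) i) t / (1 - t 0 i)).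
Proof.
move=> tD; rewrite jacobianF_factor // det_mulmx det_diag.
rewrite det_dlogK_mx ?t_ext_max; [|exact: inD_t_ext_inj|exact: inD_t_ext_neq0].
under eq_bigr do rewrite mxE.
under [in X in _ / X]eq_bigr do rewrite t_ext_widen.
by rewrite prodf_div mulrCA mulrA.
Qed.
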